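(* Let $\{\mathbb{X},\mathscr{W},\mathbf{p}\}$ be an iterated function system in the class $\Xi$. For every $\mathbf{i}=(i_1,i_2,\dots)\in\mathcal{S}$ and every $x\in\mathbb{X}$, the limit $\lim_{n\to\infty}w_{i_1}\circ\cdots\circ w_{i_n}(x)$ exists, and it does not depend on $x$. Thus $\pi$ is well-defined on $\mathcal{S}$.
   Context: Setting: $\mathbb{X}\subset\mathbb{R}^d$ and $M$ is a finite or countably infinite index set. The maps are $w_i:\mathbb{X}\to\mathbb{X}$ for $i\in M$, and $\mathbf{p}=\{p_i\}$ is a probability vector with all $p_i>0$. Bi-Lipschitz: each $w_i$ satisfies $\gamma_i|x-y|\le|w_i(x)-w_i(y)|\le\Gamma_i|x-y|$ for all $x,y\in\mathbb{X}$, with $0<\gamma_i<\Gamma_i$. Average contractivity: there is $x\in\mathbb{X}$ with $\sum_i p_i\Gamma_i<\infty$, $\sum_i p_i|w_i(x)-x|<\infty$, and $-\infty<\sum_i p_i\log\Gamma_i<0$. The class $\Xi$ consists of the IFS with bi-Lipschitz, average contracting maps satisfying $\sum_i p_i\log p_i>-\infty$. Symbolic space: $M^\infty$ carries the cylinder topology, its Borel $\sigma$-algebra $\mathscr{B}(M^\infty)$, the product measure $\mathbb{P}=\mathbf{p}^{\otimes\mathbb{N}}$, and the left shift $\sigma$. For $A\subset M^\infty$ let $\delta_{\mathbf{i}}(A,n)=\mathrm{card}(A\cap\{\sigma^k(\mathbf{i})\}_{k=0}^{n-1})$. Define \[ \mathcal{S}_0=\{\mathbf{i}:\ \lim_n \tfrac1n\delta_{\mathbf{i}}(A,n)=\mathbb{P}(A)\text{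 for all }A\in\mathscr{B}(M^\infty)\}. \] For a function $X:M\to\mathbb{R}$ with finite mean $\mathbb{E}X=\sum_i p_iX_i$, let $\mathcal{N}(X)=\{\mathbf{i}:\lim_n\frac1n\sum_{k=1}^nX_{i_k}=\mathbb{E}X\}$. Then \[ \mathcal{S}=\mathcal{S}_0\cap\mathcal{N}(X^1)\cap\mathcal{N}(X^2)\cap\mathcal{N}(X^3), \] where $X^1_i=|w_i(x)-x|$ (for a fixed point $x$; its mean is finite), $X^2_i=\log\Gamma_i$, and $X^3_i=\log p_i$. *)

From mathcomp Require Import all_boot all_order all_algebra.
From mathcomp Require Import all_classical all_reals all_analysis.
Import numFieldNormedType.Exports.
Import Order.TTheory GRing.Theory Num.Theory.
Set Implicit Arguments. Unset Strict Implicit. Unset Printing Implicit Defensive.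
Local Open Scope classical_set_scope.
Local Open Scope ring_scope.

Definition enorm (R : realType) (d : nat) (v : 'rV[R]_d) : R :=
  Num.sqrt (\sum_(j < d) v ord0 j ^+ 2).

(* When the positive parts are summable this is the value of the series in
   [-oo, +oo). *)
Definition esumR (R : realType) (M : choiceType) (f : M -> R) : \bar R :=
  (\esum_(i in [set: M]) (Num.max (f i) 0)%:E
   - \esum_(i in [set: M]) (Num.max (- f i) 0)%:E)%E.

Definition mean (R : realType) (M : choiceType) (p X : M -> R) : R :=
  fine (esumR (fun i => p i * X i)).

(* Symbolic space M^oo: sequences i = (i_1, i_2, ...) encoded as i : nat -> M
   with i_{k+1} = i k. *)
Definition shift (M : Type) (i : nat -> M) : nat -> M := fun j => i j.+1.

Definition cylinder (M : Type) (a : seq M) : set (nat -> M) :=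
  [set i | mkseq i (size a) = a].

Definition cylinders (M : Type) : set (set (nat -> M)) :=
  [set C | exists a : seq M, C = cylinder a].

(* M^oo with its Borel sigma-algebra for the cylinder topology, i.e. the
   sigma-algebra generated by the cylinders (M countable, discrete). *)
Definition symb_space (M : pointedType) := g_sigma_algebraType (@cylinders M).

Definition visits (M : Type) (A : set (nat -> M)) (i : nat -> M) (n : nat)
  : nat := count (fun k => `[< A (iter k (@shift M) i) >]) (iota 0 n).

Definition S0 (R : realType) (M : pointedType)
  (P : probability (symb_space M) R) : set (nat -> M) :=
  [set i : nat -> M | forall A : set (symb_space M), measurable A ->
     ((visits A i n)%:R / n%:R)%:E @[n --> \oo] --> P A].

Definition Nset (R : realType) (M : choiceType) (p X : M -> R)
  : set (nat -> M) :=
  [set i : nat -> M | (\sum_(k < n) X (i k)) / n%:R @[n --> \oo] --> mean p X].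

Definition Sset (R : realType) (d : nat) (M : pointedType)
  (w : M -> 'rV[R]_d -> 'rV[R]_d) (p Gam : M -> R) (x0 : 'rV[R]_d)
  (P : probability (symb_space M) R) : set (nat -> M) :=
  S0 P `&` Nset p (fun m => enorm (w m x0 - x0))
       `&` Nset p (fun m => ln (Gam m)) `&` Nset p (fun m => ln (p m)).

Definition comp_seq (R : realType) (d : nat) (M : Type)
  (w : M -> 'rV[R]_d -> 'rV[R]_d) (i : nat -> M) (n : nat) (x : 'rV[R]_d)
  : 'rV[R]_d := foldr (fun k y => w (i k) y) x (iota 0 n).

(** Along a sequence [i] in [S] the logarithmic averages of [Gamma_{i_k}]
   converge to [E log Gamma < 0], so the Lipschitz constant
   [Gamma_{i_1} ... Gamma_{i_n}] of [w_{i_1} o ... o w_{i_n}] decays like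
   [exp (n E log Gamma / 2)]; meanwhile [|w_{i_n}(x0) - x0|] grows at most
   linearly, since its averages converge.  Hence the increments
   [|w_{i_1} o ... o w_{i_n} (w_{i_{n+1}} x0 - x0)|] are dominated by a
   geometric sequence and the orbit of [x0] is Cauchy, while the orbit of any
   other [x] approaches that of [x0] at geometric speed. *)

From HB Require Import structures.
From mathcomp Require Import all_boot all_order all_algebra.
From mathcomp Require Import all_classical all_reals all_analysis.
From mathcomp Require Import ring lra.
Import numFieldNormedType.Exports.
Import Order.TTheory GRing.Theory Num.Theory.
Set Implicit Arguments. Unset Strict Implicit. Unset Printing Implicit Defensive.
Local Open Scope classical_set_scope.
Local Open Scope ring_scope.

(* Matrices carry a complete and a normed-module structure, but the library
   does not declare their join. *)
HB.instance Definition _ (R : realType) (m n : nat) :=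
  Complete.copy 'M[R]_(m, n) 'M[R]_(m, n).

Lemma enorm_ge0 (R : realType) (d : nat) (v : 'rV[R]_d) : 0 <= enorm v.
Proof. exact: sqrtr_ge0. Qed.

Lemma norm_le_enorm (R : realType) (d : nat) (v : 'rV[R]_d) : `|v| <= enorm v.
Proof.
rewrite /Num.norm /= mx_normrE.
apply: bigmax_le => [|[a j] _ /=]; first exact: enorm_ge0.
rewrite (ord1 a) /enorm -(sqrtr_sqr (v ord0 j)).
rewrite ler_sqrt ?sumr_ge0 // => [|k _]; last exact: sqr_ge0.
by rewrite (bigD1 j) //= lerDl sumr_ge0 // => k _; exact: sqr_ge0.
Qed.

Section composition.
Variables (R : realType) (d : nat) (M : Type).
Variables (X : set 'rV[R]_d) (w : M -> 'rV[R]_d -> 'rV[R]_d) (i : nat -> M).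
Hypothesis Xw : forall m x, X x -> X (w m x).

Lemma comp_seqS n x : comp_seq w i n.+1 x = comp_seq w i n (w (i n) x).
Proof. by rewrite /comp_seq -[n.+1]addn1 iotaD /= foldr_cat. Qed.

Lemma comp_seq_lipschitz (G : M -> R) :
  (forall m, 0 <= G m) ->
  (forall m x y, X x -> X y -> enorm (w m x - w m y) <= G m * enorm (x - y)) ->
  forall n x y, X x -> X y ->
  enorm (comp_seq w i n x - comp_seq w i n y) <=
    (\prod_(k < n) G (i k)) * enorm (x - y).
Proof.
move=> G_ge0 lipG; elim=> [|n IHn] x y Xx Xy; first by rewrite big_ord0 mul1r.
rewrite !comp_seqS big_ord_recr /= -mulrA.
apply: le_trans (IHn _ _ (Xw (i n) Xx) (Xw (i n) Xy)) _.
by rewrite ler_wpM2l ?prodr_ge0 //; exact: lipG.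
Qed.

End composition.

Section growth.
Variable R : realType.

Lemma prod_le_geometric_near (G : nat -> R) (mu : R) :
  (forall k, 0 < G k) -> mu < 0 ->
  (\sum_(k < n) ln (G k)) / n%:R @[n --> \oo] --> mu ->
  \forall n \near \oo, \prod_(k < n) G k <= expR (mu / 2) ^+ n.
Proof.
move=> G_gt0 mu_lt0 avg_mu.
have mu_lt : mu < mu / 2 by lra.
have [N _ avg_lt] := cvgr_lt _ avg_mu (mu / 2) mu_lt.
exists N.+1 => // n /= ltNn.
have n_gt0 : 0 < n%:R :> R by rewrite ltr0n (leq_trans _ ltNn).
have /ltW := avg_lt n (ltnW ltNn); rewrite ler_pdivrMr // => sum_le.
have -> : \prod_(k < n) G k = expR (\sum_(k < n) ln (G k)).
  by rewrite expR_sum; apply: eq_bigr => k _; rewrite lnK // posrE.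
by rewrite -expRM_natr ler_expR.
Qed.

Lemma term_le_linear_near (b : nat -> R) (nu : R) :
  (forall k, 0 <= b k) ->
  (\sum_(k < n) b k) / n%:R @[n --> \oo] --> nu ->
  \forall n \near \oo, b n <= (`|nu| + 1) * n.+1%:R.
Proof.
move=> b_ge0 avg_nu.
have nu_lt : nu < `|nu| + 1 by have := ler_norm nu; lra.
have [N _ avg_lt] := cvgr_lt _ avg_nu (`|nu| + 1) nu_lt.
exists N => // n /= leNn; have /ltW := avg_lt n.+1 (leqW leNn).
rewrite ler_pdivrMr ?ltr0n // big_ord_recr /=; apply: le_trans.
by rewrite lerDr sumr_ge0.
Qed.

Lemma le_expR_div (a x : R) : 0 < a -> x <= expR (a * x) / a.
Proof. by move=> a_gt0; rewrite ler_pdivlMr //; have := expR_ge1Dx (a * x); lra. Qed.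

(* A linear factor costs half of the exponential decay rate. *)
Lemma linear_geometric_le (C mu : R) : 0 <= C -> mu < 0 ->
  exists K, forall n, C * n.+1%:R * expR (mu / 2) ^+ n <= K * expR (mu / 4) ^+ n.
Proof.
move=> C_ge0 mu_lt0; set a := - mu / 4.
have a_gt0 : 0 < a by rewrite /a; lra.
exists (C * expR a / a) => n.
have shift_rate : expR (a * n.+1%:R) * expR (mu / 2 * n%:R) =
                  expR a * expR (mu / 4 * n%:R).
  by rewrite -!expRD /a -natr1; congr expR; field.
rewrite -!expRM_natr.
apply: (@le_trans _ _ (C * (expR (a * n.+1%:R) / a) * expR (mu / 2 * n%:R))).
  by rewrite ler_wpM2r ?expR_ge0 // ler_wpM2l // le_expR_div.
rewrite [leLHS](_ : _ = C / a * (expR (a * n.+1%:R) * expR (mu / 2 * n%:R))).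
  by rewrite shift_rate mulrA (mulrAC C).
by ring.
Qed.

Lemma cvg_geometric_increments (V : completeNormedModType R) (u : V ^nat)
    (K r : R) :
  0 <= r < 1 -> (\forall n \near \oo, `|u n.+1 - u n| <= K * r ^+ n) ->
  cvgn u.
Proof.
case/andP=> r_ge0 r_lt1 [N _ incr_le].
pose v n := u (n + N)%N.
have v_incr n : `|telescope v n| <= geometric (K * r ^+ N) r n.
  rewrite /telescope /v /= addSn -mulrA -exprD addnC.
  exact/incr_le/leq_addr.
have v_cvg : cvgn v.
  rewrite -(is_cvgDlE _ (is_cvg_cst (- v 0%N))).
  suff : cvgn (series (telescope v)) by rewrite telescopeK.
  apply: normed_cvg; apply: (series_le_cvg _ _ v_incr) => [n|n|].
  - exact: normr_ge0.
  - exact: le_trans (normr_ge0 _) (v_incr n).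
  - by apply: is_cvg_geometric_series; rewrite ger0_norm.
by apply/cvg_ex; exists (limn v); rewrite -(cvg_shiftn N).
Qed.

End growth.

Section orbit.
Variables (R : realType) (d : nat) (M : Type).
Variables (X : set 'rV[R]_d) (w : M -> 'rV[R]_d -> 'rV[R]_d) (Gam : M -> R).
Variables (i : nat -> M) (x0 : 'rV[R]_d) (mu nu : R).
Hypothesis Xw : forall m x, X x -> X (w m x).
Hypothesis Gam_gt0 : forall m, 0 < Gam m.
Hypothesis lipw : forall m x y, X x -> X y ->
  enorm (w m x - w m y) <= Gam m * enorm (x - y).
Hypothesis Xx0 : X x0.
Hypothesis mu_lt0 : mu < 0.
Hypothesis avg_lnGam :
  (\sum_(k < n) ln (Gam (i k))) / n%:R @[n --> \oo] --> mu.
Hypothesis avg_jump :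
  (\sum_(k < n) enorm (w (i k) x0 - x0)) / n%:R @[n --> \oo] --> nu.

Let Gam_ge0 m : 0 <= Gam m. Proof. exact/ltW. Qed.

Let prod_Gam_le_near :
  \forall n \near \oo, \prod_(k < n) Gam (i k) <= expR (mu / 2) ^+ n.
Proof. exact: prod_le_geometric_near (fun k => Gam_gt0 (i k)) mu_lt0 avg_lnGam. Qed.

Lemma orbit_cvg : cvgn (fun n => comp_seq w i n x0).
Proof.
have C_ge0 : 0 <= `|nu| + 1 by rewrite addr_ge0.
have [K geomK] := linear_geometric_le C_ge0 mu_lt0.
apply: (cvg_geometric_increments (K := K) (r := expR (mu / 4))).
  by rewrite expR_ge0 expR_lt1 ltr_pdivrMr // mul0r.
have jump_le := term_le_linear_near (fun k => enorm_ge0 (w (i k) x0 - x0)) avg_jump.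
near=> n; rewrite comp_seqS; apply: le_trans (norm_le_enorm _) _.
apply: le_trans (comp_seq_lipschitz i Xw Gam_ge0 lipw n (Xw _ Xx0) Xx0) _.
apply: le_trans (geomK n); rewrite mulrC ler_pM ?prodr_ge0 ?enorm_ge0 //.
- by near: n.
- by near: n.
Unshelve. all: by end_near.
Qed.

Lemma orbits_sub_cvg0 x : X x ->
  comp_seq w i n x - comp_seq w i n x0 @[n --> \oo] --> 0.
Proof.
move=> Xx; apply: norm_cvg0.
apply: (@squeeze_cvgr _ _ _ _ (fun _ => 0)
  (fun n => enorm (x - x0) * expR (mu / 2) ^+ n)).
- near=> n; rewrite normr_ge0 /=; apply: le_trans (norm_le_enorm _) _.
  apply: le_trans (comp_seq_lipschitz i Xw Gam_ge0 lipw n Xx Xx0) _.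
  by rewrite mulrC ler_wpM2l ?enorm_ge0 //; near: n.
- exact: cvg_cst.
- by apply: cvg_geometric; rewrite ger0_norm ?expR_ge0 // expR_lt1 ltr_pdivrMr // mul0r.
Unshelve. all: by end_near.
Qed.

End orbit.

Theorem lemma2p1 (R : realType) (d : nat) (M : pointedType)
  (X : set 'rV[R]_d) (w : M -> 'rV[R]_d -> 'rV[R]_d)
  (p gam Gam : M -> R) (x0 : 'rV[R]_d)
  (P : probability (symb_space M) R) :
  (* M finite or countably infinite *)
  countable [set: M] ->
  (* each w_i maps X into X *)
  (forall m x, X x -> X (w m x)) ->
  (* p is a probability vector with positive entries *)
  (forall m, 0 < p m) ->
  (\esum_(m in [set: M]) (p m)%:E = 1)%E ->
  (* bi-Lipschitz *)
  (forall m, 0 < gam m < Gam m) ->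
  (forall m x y, X x -> X y ->
     gam m * enorm (x - y) <= enorm (w m x - w m y) <= Gam m * enorm (x - y)) ->
  (* average contractivity, witnessed at x0 *)
  X x0 ->
  (\esum_(m in [set: M]) (p m * Gam m)%R%:E < +oo)%E ->
  (\esum_(m in [set: M]) (p m * enorm (w m x0 - x0))%R%:E < +oo)%E ->
  (-oo < esumR (fun m => (p m * ln (Gam m))%R) < 0)%E ->
  (* finite entropy *)
  (-oo < esumR (fun m => (p m * ln (p m))%R))%E ->
  (* P is the product (Bernoulli) measure p^{\otimes N} *)
  (forall a : seq M, P (cylinder a) = (\prod_(m <- a) p m)%:E) ->
  forall i : nat -> M, Sset w p Gam x0 P i ->
  exists l : 'rV[R]_d, forall x, X x -> comp_seq w i n x @[n --> \oo] --> l.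
Proof.
move=> _ Xw _ _ gam_lt_Gam bilip Xx0 _ _ lnGam_lt0 _ _ i [[[_ avg_jump] avg_lnGam] _].
have Gam_gt0 m : 0 < Gam m by case/andP: (gam_lt_Gam m); apply: lt_trans.
have lipw m x y : X x -> X y -> enorm (w m x - w m y) <= Gam m * enorm (x - y).
  by move=> Xx Xy; case/andP: (bilip m x y Xx Xy).
have mu_lt0 : mean p (fun m => ln (Gam m)) < 0 by exact: fine_lt0.
have orbit_x0 := orbit_cvg Xw Gam_gt0 lipw Xx0 mu_lt0 avg_lnGam avg_jump.
exists (limn (fun n => comp_seq w i n x0)) => x Xx.
have -> : (fun n => comp_seq w i n x) =
          (fun n => comp_seq w i n x - comp_seq w i n x0 + comp_seq w i n x0).
  by apply/funext => n; rewrite subrK.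
rewrite -[X in _ --> X]add0r.
exact: cvgD (orbits_sub_cvg0 Xw Gam_gt0 lipw Xx0 mu_lt0 avg_lnGam Xx) orbit_x0.
Qed.
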